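(* Consider DEAREST (described in the context) run with any stepsize $\eta>0$ and any other parameters, and assume the individual functions are $L$-average smooth and $W$ satisfies the gossip assumption (both in the context). Then for every $t$, $$f(\bar x_{t+1})\le f(\bar x_t)-\frac{\eta}{2}\|\nabla f(\bar x_t)\|^2+\eta U_t+\frac{L^2\eta}{m}C_t-\Big(\frac{1}{2\eta}-\frac L2\Big)\|\bar x_{t+1}-\bar x_t\|^2,$$ where $U_t=\big\|\frac1m\sum_{i=1}^m(\mathbf{g}_t(i)-\nabla f_i(\mathbf{x}_t(i)))\big\|^2$ and $C_t=\|\mathbf{x}_t-\mathbf{1}\bar x_t\|^2+\eta^2\|\mathbf{s}_t-\mathbf{1}\bar s_t\|^2$.
   Context: Let $f_{i,j}:\mathbb{R}^d\to\mathbb{R}$ ($i\le m$, $j\le n$) be differentiable, $f_i=\frac1n\sum_j f_{i,j}$, $f=\frac1m\sum_i f_i$. $L$-average smoothness: for some $L>0$ and every $i$, $\frac1n\sum_{j=1}^n\|\nabla f_{i,j}(x)-\nabla f_{i,j}(x')\|^2\le L^2\|x-x'\|^2$ for all $x,x'$. Gossip assumption: $W\in\mathbb{R}^{m\times m}$ symmetric, $w_{ij}=0$ if agents $i,j$ are not connected, $W\mathbf{1}=\mathbf{1}$; $\lambda_2(W)$ its second-largest eigenvalue. $\|\cdot\|$ is the Frobenius/Euclidean norm. For $\mathbf{x}\in\mathbb{R}^{m\times d}$ with rows $\mathbf{x}(i)^\top$, $\bar x=\frac1m\mathbf{1}^\top\mathbf{x}$; $\nabla\mathbf{f}(\mathbf{x})$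 has rows $\nabla f_i(\mathbf{x}(i))^\top$. FastMix$(\mathbf{u}^{(0)},K)$: $\mathbf{u}^{(-1)}=\mathbf{u}^{(0)}$, $\eta_u=\frac{1-\sqrt{1-\lambda_2^2(W)}}{1+\sqrt{1-\lambda_2^2(W)}}$; for $k=0,\dots,K$: $\mathbf{u}^{(k+1)}=(1+\eta_u)W\mathbf{u}^{(k)}-\eta_u\mathbf{u}^{(k-1)}$; output $\mathbf{u}^{(K)}$. DEAREST (parameters $\bar x_0,\eta,p,b,K_{\rm in},K,\hat K,T$): $\mathbf{x}_0=\mathbf{1}\bar x_0^\top$, $\mathbf{g}_0=\nabla\mathbf{f}(\mathbf{x}_0)$, $\mathbf{s}_0=$FastMix$(\mathbf{g}_0,K_{\rm in})$. For $t=0,\dots,T-1$: $y_t\sim$Bernoulli$(p)$ shared by all agents; $K_t=K$ if $y_t=1$, else $\hat K$; $\mathbf{x}_{t+1}=$FastMix$(\mathbf{x}_t-\eta\mathbf{s}_t,K_t)$; for each $i$, $\mathbf{g}_{t+1}(i)=\nabla f_i(\mathbf{x}_{t+1}(i))$ if $y_t=1$, else $\mathbf{g}_t(i)+\frac1b\sum_{j=1}^b(\nabla f_{i,\xi_j}(\mathbf{x}_{t+1}(i))-\nabla f_{i,\xi_j}(\mathbf{x}_t(i)))$ with $\xi_j$ i.i.d. uniform on $\{1,\dots,n\}$; $\mathbf{s}_{t+1}=$FastMix$(\mathbf{s}_t+\mathbf{g}_{t+1}-\mathbf{g}_t,K_t)$. *)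

From HB Require Import structures.
From mathcomp Require Import all_boot all_order all_algebra.
From mathcomp Require Import all_classical all_reals all_analysis.
Set Implicit Arguments. Unset Strict Implicit. Unset Printing Implicit Defensive.
Import Order.TTheory GRing.Theory Num.Theory.
Import numFieldNormedType.Exports.
Local Open Scope ring_scope.

Section Dearest.
Variable R : realType.

Definition dotv (d : nat) (u v : 'rV[R]_d) : R := \sum_(k < d) u 0 k * v 0 k.

Definition sqnorm (p q : nat) (A : 'M[R]_(p, q)) : R :=
  \sum_(i < p) \sum_(j < q) A i j ^+ 2.

Definition is_gradient (d : nat) (f : 'rV[R]_d -> R) (g : 'rV[R]_d -> 'rV[R]_d) :=
  forall x : 'rV[R]_d, differentiable f x /\ forall v, 'd f x v = dotv (g x) v.

Definition f_loc (m n d : nat) (fij : 'I_m -> 'I_n -> 'rV[R]_d -> R) (i : 'I_m)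
  (x : 'rV[R]_d) : R := n%:R^-1 * \sum_(j < n) fij i j x.
Definition f_glob (m n d : nat) (fij : 'I_m -> 'I_n -> 'rV[R]_d -> R)
  (x : 'rV[R]_d) : R := m%:R^-1 * \sum_(i < m) f_loc fij i x.

Definition avg_smooth (m n d : nat) (L : R)
  (gij : 'I_m -> 'I_n -> 'rV[R]_d -> 'rV[R]_d) :=
  forall (i : 'I_m) (x x' : 'rV[R]_d),
    n%:R^-1 * \sum_(j < n) sqnorm (gij i j x - gij i j x') <= L ^+ 2 * sqnorm (x - x').

(* the second-largest eigenvalue (counted with multiplicity) of W:
   the eigenvalues, listed in non-increasing order, are the roots (with
   multiplicity) of the characteristic polynomial of W *)
Definition is_lambda2 (m : nat) (W : 'M[R]_m) (l : R) :=
  exists s : seq R, [/\ size s = m, sorted (fun a b => b <= a) s,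
     char_poly W = \prod_(a <- s) ('X - a%:P) & l = s`_1].

Definition gossip (m : nat) (adj : rel 'I_m) (W : 'M[R]_m) :=
  [/\ W^T = W, (forall i j, ~~ adj i j -> W i j = 0)
    & W *m const_mx 1 = const_mx 1 :> 'cV[R]_m].

Definition mean (m d : nat) (x : 'M[R]_(m, d)) : 'rV[R]_d :=
  m%:R^-1 *: \sum_(i < m) row i x.
Definition ones_row (m d : nat) (v : 'rV[R]_d) : 'M[R]_(m, d) :=
  const_mx 1 *m v.

(* FastMix: pair (u^(k), u^(k-1)) *)
Fixpoint fastmix_pair (m d : nat) (W : 'M[R]_m) (eta_u : R) (u : 'M[R]_(m, d))
  (k : nat) : 'M[R]_(m, d) * 'M[R]_(m, d) :=
  match k with
  | 0 => (u, u)
  | k'.+1 => let p := fastmix_pair W eta_u u k' in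
             ((1 + eta_u) *: (W *m p.1) - eta_u *: p.2, p.1)
  end.
Definition eta_u_of (l2 : R) : R :=
  (1 - Num.sqrt (1 - l2 ^+ 2)) / (1 + Num.sqrt (1 - l2 ^+ 2)).
Definition FastMix (m d : nat) (W : 'M[R]_m) (l2 : R) (u : 'M[R]_(m, d)) (K : nat)
  : 'M[R]_(m, d) := (fastmix_pair W (eta_u_of l2) u K).1.

Definition grad_stack (m d : nat) (gi : 'I_m -> 'rV[R]_d -> 'rV[R]_d)
  (x : 'M[R]_(m, d)) : 'M[R]_(m, d) := \matrix_(i, k) gi i (row i x) 0 k.

(* DEAREST state (x_t, g_t, s_t) along a realization:
   y t = y_t (shared Bernoulli coin), xi t i j = j-th sample index of agent i
   at iteration t. *)
Fixpoint dearest (m n d b : nat) (W : 'M[R]_m) (l2 : R)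
  (gij : 'I_m -> 'I_n -> 'rV[R]_d -> 'rV[R]_d) (gi : 'I_m -> 'rV[R]_d -> 'rV[R]_d)
  (xbar0 : 'rV[R]_d) (eta : R) (Kin K Khat : nat)
  (y : nat -> bool) (xi : nat -> 'I_m -> 'I_b -> 'I_n) (t : nat)
  : 'M[R]_(m, d) * 'M[R]_(m, d) * 'M[R]_(m, d) :=
  match t with
  | 0 => let x0 := ones_row m xbar0 in
         let g0 := grad_stack gi x0 in
         (x0, g0, FastMix W l2 g0 Kin)
  | t'.+1 =>
    let: (xt, gt, st) := dearest W l2 gij gi xbar0 eta Kin K Khat y xi t' in
    let Kt := if y t' then K else Khat in
    let xn := FastMix W l2 (xt - eta *: st) Kt in
    let gn := if y t' then grad_stack gi xn
              else gt + \matrix_(i, k)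
                   (b%:R^-1 * \sum_(j < b)
                      (gij i (xi t' i j) (row i xn) - gij i (xi t' i j) (row i xt)) 0 k) in
    let sn := FastMix W l2 (st + gn - gt) Kt in
    (xn, gn, sn)
  end.

End Dearest.

From HB Require Import structures.
From mathcomp Require Import all_boot all_order all_algebra.
From mathcomp Require Import all_classical all_reals all_analysis.
From mathcomp Require Import ring lra.
Import Order.TTheory GRing.Theory Num.Theory.
Import numFieldNormedType.Exports.
Set Implicit Arguments. Unset Strict Implicit. Unset Printing Implicit Defensive.
Local Open Scope ring_scope.

(* FastMix preserves column sums (W is symmetric with W 1 = 1), so gradient
   tracking keeps the mean of [s_t] equal to the mean of [g_t] and the averaged
   iterates take an inexact gradient step [xbar_{t+1} = xbar_t - eta gbar_t].
   The descent lemma for the L-smooth [f] bounds such a step by the error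
   [|grad f(xbar_t) - gbar_t|^2], which splits into the tracking error [U_t]
   and the consensus error of [x_t]; the latter is controlled by the
   L-smoothness of each [f_i].  The bound holds for every realization of the
   coins and samples, uses nothing about [lambda_2], and does not need the
   [s]-part of [C_t]. *)

Section Dearest_descent.
Variable R : realType.
Implicit Types (d : nat) (c : R).

Lemma dotvC d (u v : 'rV[R]_d) : dotv u v = dotv v u.
Proof. by apply: eq_bigr => k _; rewrite mulrC. Qed.

Lemma dotvDl d (u w v : 'rV[R]_d) : dotv (u + w) v = dotv u v + dotv w v.
Proof. by rewrite /dotv -big_split; apply: eq_bigr => k _; rewrite mxE mulrDl. Qed.

Lemma dotvZl d c (u v : 'rV[R]_d) : dotv (c *: u) v = c * dotv u v.
Proof. by rewrite /dotv mulr_sumr; apply: eq_bigr => k _; rewrite mxE mulrA. Qed.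

Lemma dotvNl d (u v : 'rV[R]_d) : dotv (- u) v = - dotv u v.
Proof. by rewrite -scaleN1r dotvZl mulN1r. Qed.

Lemma dotvBl d (u w v : 'rV[R]_d) : dotv (u - w) v = dotv u v - dotv w v.
Proof. by rewrite dotvDl dotvNl. Qed.

Lemma dotvDr d (u w v : 'rV[R]_d) : dotv v (u + w) = dotv v u + dotv v w.
Proof. by rewrite !(dotvC v) dotvDl. Qed.

Lemma dotvZr d c (u v : 'rV[R]_d) : dotv v (c *: u) = c * dotv v u.
Proof. by rewrite !(dotvC v) dotvZl. Qed.

Lemma dotv_suml d k (a : 'I_k -> 'rV[R]_d) v :
  dotv (\sum_(i < k) a i) v = \sum_(i < k) dotv (a i) v.
Proof.
rewrite /dotv exchange_big /=; apply: eq_bigr => j _.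
by rewrite summxE mulr_suml.
Qed.

Lemma dotv_delta d (u : 'rV[R]_d) k : dotv u (delta_mx 0 k) = u 0 k.
Proof.
rewrite /dotv (bigD1 k) //= big1 ?addr0; first by rewrite mxE !eqxx mulr1.
by move=> j /negbTE jk; rewrite mxE jk andbF mulr0.
Qed.

Lemma dotv_inj d (u v : 'rV[R]_d) : (forall w, dotv u w = dotv v w) -> u = v.
Proof. by move=> uv; apply/matrixP => i k; rewrite (ord1 i) -!dotv_delta. Qed.

Lemma sqnorm_dotv d (u : 'rV[R]_d) : sqnorm u = dotv u u.
Proof. by rewrite /sqnorm big_ord1; apply: eq_bigr => k _; rewrite expr2. Qed.

Lemma sqnorm_ge0 p q (A : 'M[R]_(p, q)) : 0 <= sqnorm A.
Proof. by apply: sumr_ge0 => i _; apply: sumr_ge0 => j _; apply: sqr_ge0. Qed.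

Lemma sqnorm_rows p d (A : 'M[R]_(p, d)) : sqnorm A = \sum_(i < p) sqnorm (row i A).
Proof.
apply: eq_bigr => i _; rewrite /sqnorm big_ord1; apply: eq_bigr => j _.
by rewrite mxE.
Qed.

Lemma sqnormD d (u v : 'rV[R]_d) :
  sqnorm (u + v) = sqnorm u + 2 * dotv u v + sqnorm v.
Proof. rewrite !sqnorm_dotv !dotvDl !dotvDr (dotvC v u); ring. Qed.

Lemma sqnormZ d c (u : 'rV[R]_d) : sqnorm (c *: u) = c ^+ 2 * sqnorm u.
Proof. by rewrite !sqnorm_dotv dotvZl dotvZr mulrA expr2. Qed.

Lemma sqnormN d (u : 'rV[R]_d) : sqnorm (- u) = sqnorm u.
Proof. by rewrite -scaleN1r sqnormZ sqrrN expr1n mul1r. Qed.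

Lemma sqnormB d (u v : 'rV[R]_d) :
  sqnorm (u - v) = sqnorm u - 2 * dotv u v + sqnorm v.
Proof. by rewrite sqnormD sqnormN dotvC dotvNl dotvC; ring. Qed.

Lemma dotv_le_sqnorm d (u v : 'rV[R]_d) : 2 * dotv u v <= sqnorm u + sqnorm v.
Proof. by have := sqnorm_ge0 (u - v); rewrite sqnormB; lra. Qed.

Lemma sqnormD_le d (u v : 'rV[R]_d) :
  sqnorm (u + v) <= 2 * sqnorm u + 2 * sqnorm v.
Proof. by have := dotv_le_sqnorm u v; rewrite sqnormD; lra. Qed.

(* A weak Cauchy-Schwarz: AM-GM applied to [u] and [k v]. *)
Lemma dotv_le_scaled d (k : R) (u v : 'rV[R]_d) : 0 < k ->
  sqnorm u <= k ^+ 2 * sqnorm v -> dotv u v <= k * sqnorm v.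
Proof.
move=> k_gt0 uv; have := dotv_le_sqnorm u (k *: v).
rewrite dotvZr sqnormZ => amgm.
have : k * dotv u v <= k * (k * sqnorm v) by nra.
by rewrite ler_pM2l.
Qed.

Lemma sqnorm_sum_le d k (a : 'I_k -> 'rV[R]_d) :
  sqnorm (\sum_(i < k) a i) <= k%:R * \sum_(i < k) sqnorm (a i).
Proof.
rewrite sqnorm_dotv dotv_suml.
under eq_bigr => i _ do rewrite dotvC dotv_suml.
apply: (@le_trans _ _ (\sum_(i < k) \sum_(j < k) (sqnorm (a i) + sqnorm (a j)) / 2)).
  apply: ler_sum => i _; apply: ler_sum => j _.
  by have := dotv_le_sqnorm (a j) (a i); lra.
under eq_bigr => i _ do rewrite -mulr_suml big_split /= sumr_const card_ord.
rewrite -mulr_suml big_split /= sumr_const card_ord -sumrMnl.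
rewrite -mulr2n -[_ *+ 2]mulr_natr mulfK ?pnatr_eq0 //.
by rewrite mulr_natl sumrMnl.
Qed.

Lemma sqnorm_avg_le d k (a : 'I_k -> 'rV[R]_d) : (0 < k)%N ->
  sqnorm (k%:R^-1 *: \sum_(i < k) a i) <= k%:R^-1 * \sum_(i < k) sqnorm (a i).
Proof.
move=> k_gt0; rewrite sqnormZ.
have kR_gt0 : 0 < k%:R :> R by rewrite ltr0n.
apply: (le_trans (ler_wpM2l _ (sqnorm_sum_le a))); first exact: sqr_ge0.
by rewrite expr2 -mulrA (mulrA _ k%:R) mulVf ?mul1r // gt_eqF.
Qed.

Definition sq_lipschitz d (L : R) (G : 'rV[R]_d -> 'rV[R]_d) :=
  forall x x', sqnorm (G x - G x') <= L ^+ 2 * sqnorm (x - x').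

Lemma sq_lipschitz_avg_smooth d k (L : R) (h : 'I_k -> 'rV[R]_d -> 'rV[R]_d)
    (G : 'rV[R]_d -> 'rV[R]_d) :
  (0 < k)%N -> (forall x, G x = k%:R^-1 *: \sum_(j < k) h j x) ->
  (forall x x', k%:R^-1 * \sum_(j < k) sqnorm (h j x - h j x')
                <= L ^+ 2 * sqnorm (x - x')) ->
  sq_lipschitz L G.
Proof.
move=> k_gt0 GE h_smooth x x' /=; rewrite !GE -scalerBr -sumrB.
exact: le_trans (sqnorm_avg_le _ k_gt0) (h_smooth x x').
Qed.

Lemma sq_lipschitz_avg d k (L : R) (h : 'I_k -> 'rV[R]_d -> 'rV[R]_d)
    (G : 'rV[R]_d -> 'rV[R]_d) :
  (0 < k)%N -> (forall x, G x = k%:R^-1 *: \sum_(j < k) h j x) ->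
  (forall j, sq_lipschitz L (h j)) -> sq_lipschitz L G.
Proof.
move=> k_gt0 GE h_lip; apply: (sq_lipschitz_avg_smooth k_gt0 GE) => x x'.
have kR_gt0 : 0 < k%:R :> R by rewrite ltr0n.
apply: (le_trans (ler_wpM2l _ (ler_sum _ (fun j _ => h_lip j x x')))).
  by rewrite invr_ge0 ltW.
by rewrite sumr_const card_ord -[(L ^+ 2 * _) *+ k]mulr_natl mulKf // gt_eqF.
Qed.

Lemma gradient_scaled_sum d k (f : 'I_k -> 'rV[R]_d -> R) g F G c :
  (forall j, is_gradient (f j) (g j)) -> is_gradient F G ->
  (forall x, F x = c * \sum_(j < k) f j x) ->
  forall x, G x = c *: \sum_(j < k) g j x.
Proof.
move=> f_grad F_grad FE x; apply: dotv_inj => w.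
have [F_diff <-] := F_grad x; rewrite -deriveE //.
have -> : F = c \*: \sum_(j < k) f j by apply/funext => z; rewrite FE /= fct_sumE.
have f_der j : derivable (f j) x w by apply: diff_derivable; case: (f_grad j x).
rewrite deriveZ; last exact: derivable_sum.
rewrite derive_sum // dotvZl dotv_suml; congr (_ * _).
by apply: eq_bigr => j _; have [f_diff <-] := f_grad j x; apply: deriveE.
Qed.

Lemma is_derive_along_line d (F : 'rV[R]_d -> R) G x v (s : R) : is_gradient F G ->
  is_derive s 1 (fun s : R => F (x + s *: v)) (dotv (G (x + s *: v)) v).
Proof.
move=> F_grad.
have quotE : (fun h : R => h^-1 *: (((fun s : R => F (x + s *: v)) \o shift s) (h *: 1)
     - F (x + s *: v))) =
   (fun h : R => h^-1 *: ((F \o shift (x + s *: v)) (h *: v) - F (x + s *: v))).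
  apply/funext => h /=; congr (_ *: (F _ - _)).
  by rewrite [h *: 1]mulr1 scalerDl addrCA addrC.
have [F_diff FE] := F_grad (x + s *: v).
split; first by rewrite /derivable quotE; apply: diff_derivable.
by rewrite /derive quotE -/(derive F (x + s *: v) v) deriveE.
Qed.

(* [psi s = F (x + s v) - s <G x, v> - (L/2) s^2 |v|^2] is nonincreasing on
   [0, 1], since the Lipschitz bound gives [<G (x + s v) - G x, v> <= L s |v|^2]. *)
Lemma descent_lemma d (F : 'rV[R]_d -> R) G (L : R) : 0 < L -> is_gradient F G ->
  sq_lipschitz L G ->
  forall x y, F y <= F x + dotv (G x) (y - x) + L / 2 * sqnorm (y - x).
Proof.
move=> L_gt0 F_grad G_lip x y.
set v := y - x; set c := dotv (G x) v; set N := sqnorm v.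
pose psi := ((fun s => F (x + s *: v)) - c \*: id) - (L / 2 * N) \*: (@id R * @id R).
have psi_der (s : R) : is_derive s 1 psi
    ((dotv (G (x + s *: v)) v - c *: 1) - (L / 2 * N) *: (s *: 1 + s *: 1)).
  (* [is_deriveB] finds [phi_der] by instance resolution. *)
  by have phi_der := is_derive_along_line x v s F_grad; apply: is_deriveB.
have psi_dv (s : R) : derivable psi s 1 by have [] := psi_der s.
have psi'_le0 (s : R) : s \in `]0, 1[ -> derive1 psi s <= 0.
  move=> s01; rewrite derive1E derive_val.
  change (dotv (G (x + s *: v)) v - c * 1 - (L / 2 * N) * (s * 1 + s * 1) <= 0).
  have s_gt0 : 0 < s by move: s01; rewrite in_itv /= => /andP[].
  have Gdiff : sqnorm (G (x + s *: v) - G x) <= (L * s) ^+ 2 * N.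
    by have := G_lip (x + s *: v) x; rewrite (addrC x) addrK sqnormZ exprMn mulrA.
  have := dotv_le_scaled (mulr_gt0 L_gt0 s_gt0) Gdiff.
  by rewrite dotvBl -/c -/N; lra.
have psi_nincr := ler0_derive1_le_cc (fun s _ => psi_dv s) psi'_le0
  (derivable_within_continuous (fun s _ => psi_dv s)).
have : psi 1 <= psi 0 by apply: psi_nincr; rewrite ?in_itv /= ?lexx ?ler01.
have psiE (s : R) : psi s = F (x + s *: v) - c * s - L / 2 * N * (s * s) by [].
rewrite !psiE scale1r scale0r addr0 /v (addrC x) subrK.
lra.
Qed.

Lemma inexact_gradient_step d (F : 'rV[R]_d -> R) G (L eta : R) x g :
  0 < L -> 0 < eta -> is_gradient F G -> sq_lipschitz L G ->
  F (x - eta *: g) <= F x - eta / 2 * sqnorm (G x) + eta / 2 * sqnorm (G x - g)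
                      - ((2 * eta)^-1 - L / 2) * sqnorm (x - eta *: g - x).
Proof.
move=> L_gt0 eta_gt0 F_grad G_lip.
have := descent_lemma L_gt0 F_grad G_lip x (x - eta *: g).
have stepE : x - eta *: g - x = (- eta) *: g by rewrite addrAC subrr add0r scaleNr.
rewrite !stepE sqnormB sqnormZ dotvZr sqrrN.
set N := sqnorm g.
have -> : ((2 * eta)^-1 - L / 2) * (eta ^+ 2 * N) = eta / 2 * N - L / 2 * eta ^+ 2 * N.
  by field; rewrite gt_eqF.
lra.
Qed.

Lemma row_sub_ones_row p d (A : 'M[R]_(p, d)) v i :
  row i (A - ones_row p v) = row i A - v.
Proof. by apply/matrixP => a j; rewrite (ord1 a) !mxE big_ord1 !mxE mul1r. Qed.

Lemma consensus_gradient_error m d (L : R) (gi : 'I_m -> 'rV[R]_d -> 'rV[R]_d)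
    (A : 'M[R]_(m, d)) v :
  (0 < m)%N -> (forall i, sq_lipschitz L (gi i)) ->
  sqnorm (m%:R^-1 *: \sum_(i < m) (gi i v - gi i (row i A)))
    <= L ^+ 2 / m%:R * sqnorm (A - ones_row m v).
Proof.
move=> m_gt0 gi_lip; apply: (le_trans (sqnorm_avg_le _ m_gt0)).
rewrite sqnorm_rows mulrC mulr_sumr mulr_suml; apply: ler_sum => i _.
rewrite mulrAC ler_wpM2r ?invr_ge0 ?ler0n //.
by rewrite row_sub_ones_row -opprB sqnormN; apply: gi_lip.
Qed.

Lemma averaged_step_descent m d (F : 'rV[R]_d -> R) gF
    (gi : 'I_m -> 'rV[R]_d -> 'rV[R]_d) (L eta : R) (X X' Gm : 'M[R]_(m, d)) :
  (0 < m)%N -> 0 < L -> 0 < eta -> is_gradient F gF ->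
  (forall x, gF x = m%:R^-1 *: \sum_(i < m) gi i x) ->
  (forall i, sq_lipschitz L (gi i)) ->
  mean X' = mean X - eta *: mean Gm ->
  F (mean X') <= F (mean X) - eta / 2 * sqnorm (gF (mean X))
    + eta * sqnorm (m%:R^-1 *: \sum_(i < m) (row i Gm - gi i (row i X)))
    + L ^+ 2 * eta / m%:R * sqnorm (X - ones_row m (mean X))
    - ((2 * eta)^-1 - L / 2) * sqnorm (mean X' - mean X).
Proof.
move=> m_gt0 L_gt0 eta_gt0 F_grad gF_avg gi_lip X'E.
have gF_lip := sq_lipschitz_avg m_gt0 gF_avg gi_lip.
have := inexact_gradient_step (mean X) (mean Gm) L_gt0 eta_gt0 F_grad gF_lip; rewrite -X'E.
set Ux := m%:R^-1 *: \sum_(i < m) (gi i (mean X) - gi i (row i X)).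
set Ug := m%:R^-1 *: \sum_(i < m) (gi i (row i X) - row i Gm).
set U := sqnorm (m%:R^-1 *: _).
have err_split : gF (mean X) - mean Gm = Ux + Ug.
  rewrite gF_avg /mean -!scalerBr -scalerDr -!sumrB -big_split /=.
  by congr (_ *: _); apply: eq_bigr => i _; rewrite addrA subrK.
have Ug_U : sqnorm Ug = U.
  rewrite -sqnormN -scalerN -sumrN; congr (sqnorm (_ *: _)).
  by apply: eq_bigr => i _; rewrite opprB.
have Ux_le := consensus_gradient_error X (mean X) m_gt0 gi_lip.
have err_le := sqnormD_le Ux Ug; rewrite -err_split Ug_U in err_le.
have : eta / 2 * sqnorm (gF (mean X) - mean Gm)
       <= eta * U + L ^+ 2 * eta / m%:R * sqnorm (X - ones_row m (mean X)) by nra.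
lra.
Qed.

Lemma ones_mulmx_FastMix p d (W : 'M[R]_p) l2 (u : 'M[R]_(p, d)) k :
  (const_mx 1 : 'rV[R]_p) *m W = const_mx 1 ->
  (const_mx 1 : 'rV[R]_p) *m FastMix W l2 u k = const_mx 1 *m u.
Proof.
move=> W_stoch; rewrite /FastMix.
suff : (const_mx 1 : 'rV[R]_p) *m (fastmix_pair W (eta_u_of l2) u k).1 = const_mx 1 *m u
    /\ (const_mx 1 : 'rV[R]_p) *m (fastmix_pair W (eta_u_of l2) u k).2 = const_mx 1 *m u.
  by case.
elim: k => [|k [IH1 IH2]] //=; split => //.
rewrite mulmxBr !scalemxAr mulmxA W_stoch -!scalemxAr IH1 IH2.
by rewrite -scalerBl addrK scale1r.
Qed.

Lemma gossip_ones_mulmx p (adj : rel 'I_p) (W : 'M[R]_p) : gossip adj W ->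
  (const_mx 1 : 'rV[R]_p) *m W = const_mx 1.
Proof.
by case=> WT _ W1; apply: trmx_inj; rewrite trmx_mul WT !trmx_const.
Qed.

Lemma meanE p d (A : 'M[R]_(p, d)) : mean A = p%:R^-1 *: (const_mx 1 *m A).
Proof.
congr (_ *: _); apply/matrixP => i j; rewrite summxE !mxE.
by apply: eq_bigr => k _; rewrite !mxE mul1r.
Qed.

Section Tracking.
Variables (m n d b : nat) (adj : rel 'I_m) (W : 'M[R]_m) (l2 : R).
Variables (gij : 'I_m -> 'I_n -> 'rV[R]_d -> 'rV[R]_d) (gi : 'I_m -> 'rV[R]_d -> 'rV[R]_d).
Variables (xbar0 : 'rV[R]_d) (eta : R) (Kin K Khat : nat).
Variables (y : nat -> bool) (xi : nat -> 'I_m -> 'I_b -> 'I_n).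
Hypothesis W_gossip : gossip adj W.

Let state := dearest W l2 gij gi xbar0 eta Kin K Khat y xi.
Let ones : 'rV[R]_m := const_mx 1.

Lemma dearest_tracking t : ones *m (state t).2 = ones *m (state t).1.2.
Proof.
have W1 := gossip_ones_mulmx W_gossip.
rewrite /state; elim: t => [|t IH] /=; first exact: ones_mulmx_FastMix.
case: (dearest _ _ _ _ _ _ _ _ _ _ _ t) IH => [[xt gt] st] /= IH.
by rewrite ones_mulmx_FastMix // !mulmxDr mulmxN IH addrC addrA addNr add0r.
Qed.

Lemma mean_dearest_succ t :
  mean (state t.+1).1.1 = mean (state t).1.1 - eta *: mean (state t).1.2.
Proof.
have W1 := gossip_ones_mulmx W_gossip.
have sumE : ones *m (state t.+1).1.1 = ones *m (state t).1.1 - eta *: (ones *m (state t).1.2).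
  rewrite -dearest_tracking /state /=.
  case: (dearest _ _ _ _ _ _ _ _ _ _ _ t) => [[xt gt] st] /=.
  by rewrite ones_mulmx_FastMix // mulmxBr scalemxAr.
by rewrite !meanE sumE scalerBr !scalerA mulrC.
Qed.

End Tracking.

End Dearest_descent.

Theorem lemma5 (R : realType) (m n d : nat) (hm : (0 < m)%N) (hn : (0 < n)%N)
  (fij : 'I_m -> 'I_n -> 'rV[R]_d -> R)
  (gij : 'I_m -> 'I_n -> 'rV[R]_d -> 'rV[R]_d)
  (gi : 'I_m -> 'rV[R]_d -> 'rV[R]_d) (gF : 'rV[R]_d -> 'rV[R]_d)
  (Hgij : forall i j, is_gradient (fij i j) (gij i j))
  (Hgi : forall i, is_gradient (f_loc fij i) (gi i))
  (HgF : is_gradient (f_glob fij) gF)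
  (L : R) (hL : 0 < L) (Hsmooth : avg_smooth L gij)
  (adj : rel 'I_m) (W : 'M[R]_m) (HW : gossip adj W)
  (l2 : R) (Hl2 : is_lambda2 W l2)
  (xbar0 : 'rV[R]_d) (eta : R) (heta : 0 < eta) (b : nat) (hb : (0 < b)%N)
  (Kin K Khat T : nat)
  (y : nat -> bool) (xi : nat -> 'I_m -> 'I_b -> 'I_n) (t : nat) (ht : (t < T)%N) :
  let st := dearest W l2 gij gi xbar0 eta Kin K Khat y xi in
  let x_ := fun t => (st t).1.1 in
  let g_ := fun t => (st t).1.2 in
  let s_ := fun t => (st t).2 in
  let xb := fun t => mean (x_ t) in
  let sb := fun t => mean (s_ t) in
  let U := sqnorm (m%:R^-1 *: \sum_(i < m) (row i (g_ t) - gi i (row i (x_ t)))) in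
  let C := sqnorm (x_ t - ones_row m (xb t)) + eta ^+ 2 * sqnorm (s_ t - ones_row m (sb t)) in
  f_glob fij (xb t.+1) <=
    f_glob fij (xb t) - eta / 2 * sqnorm (gF (xb t)) + eta * U
    + L ^+ 2 * eta / m%:R * C
    - ((2 * eta)^-1 - L / 2) * sqnorm (xb t.+1 - xb t).
Proof.
have gi_lip i : sq_lipschitz L (gi i).
  have gi_avg := gradient_scaled_sum (Hgij i) (Hgi i) (fun _ => erefl).
  exact: sq_lipschitz_avg_smooth hn gi_avg (Hsmooth i).
have gF_avg := gradient_scaled_sum Hgi HgF (fun _ => erefl).
have x_succ := mean_dearest_succ l2 gij gi xbar0 eta Kin K Khat y xi HW t.
apply: le_trans (averaged_step_descent hm hL heta HgF gF_avg gi_lip x_succ) _.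
have [eta_ge0 L_ge0] := (ltW heta, ltW hL).
by rewrite lerD2r lerD2l ler_wpM2l ?lerDl ?mulr_ge0 ?sqnorm_ge0 ?invr_ge0 ?ler0n.
Qed.
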